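(* Let $p$ be a prime and $q=p^n$ with $n$ odd and $q\equiv 1 \pmod 3$; let $\xi\in\mathbb{F}_p^\times$ be a nonsquare in $\mathbb{F}_p$ (hence, $n$ being odd, also a nonsquare in $\mathbb{F}_q$). Let $\delta\in\mathbb{F}_q$ be a cubic nonresidue, and let $\mathbb{F}_q(\delta^{1/3})$ be the cubic extension with $\mathbb{F}_q$-basis $\{1,\delta^{1/3},\delta^{2/3}\}$; write $\alpha=\alpha_1+\alpha_2\delta^{1/3}+\alpha_3\delta^{2/3}$ with $\alpha_i\in\mathbb{F}_q$. Let $\mathbb{H}_q=\{(\alpha,\beta)\in \mathbb{F}_q(\delta^{1/3})^2 : \alpha_2\beta_3-\alpha_3\beta_2\neq 0\}$ with the action of $\mathrm{GL}_3(\mathbb{F}_q)$ given by \[ \begin{bmatrix} a & b & c\\ d & e & f\\ r & s & t \end{bmatrix} (\alpha,\beta) = \left(\frac{a\alpha+b\beta+c}{r\alpha+s\beta+t}, \frac{d\alpha+e\beta+f}{r\alpha+s\beta+t} \right). \] Let \[H=\left\{\begin{bmatrix} a & b\xi & 0\\ b & a & 0\\ 0 & 0 & c\end{bmatrix} : a,b,c\in\mathbb{F}_q,\ c(a^2-b^2\xi)\neq 0\right\}.\] Then \[\left\{\left(x+u\delta^{1/3}+v\delta^{2/3},\,y+\delta^{1/3}\right) : v\in\mathbb{F}_q^\times,\ x,y,u\in\mathbb{F}_q\right\}\] is a fundamental domain for the action of $H$ on $\mathbb{H}_q$.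
   Context: A fundamental domain for the action of a subgroup $H$ on $\mathbb{H}_q$ is a subset of $\mathbb{H}_q$ containing exactly one element of each $H$-orbit. A cubic nonresidue is an element of $\mathbb{F}_q^\times$ that is not a cube in $\mathbb{F}_q$. The group $H$ is the centralizer in $\mathrm{GL}_3(\mathbb{F}_q)$ of a matrix $\begin{bmatrix}k&l\xi&0\\l&k&0\\0&0&m\end{bmatrix}$ with $k\in\mathbb{F}_p$, $l,m\in\mathbb{F}_p^\times$. *)

From mathcomp Require Import all_boot all_order all_algebra.
Set Implicit Arguments. Unset Strict Implicit. Unset Printing Implicit Defensive.
Import GRing.Theory.
Local Open Scope ring_scope.

(* The cubic extension F(delta^(1/3)) is modelled concretely as triples
   (x1, x2, x3) standing for x1 + x2 delta^(1/3) + x3 delta^(2/3). *)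
Section Cubic.
Variable F : finFieldType.
Variable delta : F.

Definition cub := (F * F * F)%type.
Definition cmk (x1 x2 x3 : F) : cub := (x1, x2, x3).
Definition c1 (x : cub) : F := x.1.1.
Definition c2 (x : cub) : F := x.1.2.
Definition c3 (x : cub) : F := x.2.

Definition cconst (a : F) : cub := cmk a 0 0.
Definition cadd (x y : cub) : cub := cmk (c1 x + c1 y) (c2 x + c2 y) (c3 x + c3 y).
Definition cscale (a : F) (x : cub) : cub := cmk (a * c1 x) (a * c2 x) (a * c3 x).
(* multiplication using (delta^(1/3))^3 = delta *)
Definition cmul (x y : cub) : cub :=
  cmk (c1 x * c1 y + delta * (c2 x * c3 y + c3 x * c2 y))
      (c1 x * c2 y + c2 x * c1 y + delta * (c3 x * c3 y))
      (c1 x * c3 y + c2 x * c2 y + c3 x * c1 y).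
(* multiplicative inverse (the unique y with x*y = 1 when delta is a cubic
   nonresidue, and 0 if none exists) *)
Definition cinv (x : cub) : cub :=
  if [pick y : cub | cmul x y == cconst 1] is Some y then y else cconst 0.

Definition Hq (z : cub * cub) : Prop :=
  c2 z.1 * c3 z.2 - c3 z.1 * c2 z.2 != 0.

Definition mact (M : 'M[F]_3) (z : cub * cub) : cub * cub :=
  let e i j := M (inord i) (inord j) in
  let al := z.1 in let be := z.2 in
  let den := cadd (cadd (cscale (e 2 0)%N al) (cscale (e 2 1)%N be)) (cconst (e 2 2)%N) in
  let n1 := cadd (cadd (cscale (e 0 0)%N al) (cscale (e 0 1)%N be)) (cconst (e 0 2)%N) in
  let n2 := cadd (cadd (cscale (e 1 0)%N al) (cscale (e 1 1)%N be)) (cconst (e 1 2)%N) in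
  (cmul n1 (cinv den), cmul n2 (cinv den)).

End Cubic.

Definition hmat (F : finFieldType) (xi a b c : F) : 'M[F]_3 :=
  \matrix_(i < 3, j < 3)
    match val i, val j with
    | 0%N, 0%N => a | 0%N, 1%N => b * xi | 1%N, 0%N => b
    | 1%N, 1%N => a | 2%N, 2%N => c
    | _, _ => 0
    end.

Definition inH (F : finFieldType) (xi : F) (M : 'M[F]_3) : Prop :=
  exists a b c : F, c * (a ^+ 2 - b ^+ 2 * xi) != 0 /\ M = hmat xi a b c.

Definition fundamental_domain (F : finFieldType) (delta : F)
    (G : 'M[F]_3 -> Prop) (X D : cub F * cub F -> Prop) : Prop :=
  (forall z, D z -> X z) /\
  (forall z, X z -> exists! w, D w /\ exists M, G M /\ w = mact delta M z).

Definition Dom (F : finFieldType) (z : cub F * cub F) : Prop :=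
  exists x y u v : F, v != 0 /\ z = (cmk x u v, cmk y 1 0).

From mathcomp Require Import all_boot all_order all_algebra all_field.
From mathcomp Require Import ring.

Set Implicit Arguments.
Unset Strict Implicit.
Unset Printing Implicit Defensive.

Import GRing.Theory.
Local Open Scope ring_scope.

(* Since the last row of every element of H is (0, 0, c), it acts on H_q by
   the linear maps (alpha, beta) |-> (a alpha + b xi beta, b alpha + a beta)
   with (a, b) divided by c.  Asking the image to have second coordinate
   delta^(1/3) is a 2x2 linear system in (a, b) whose determinant
   alpha2 beta3 - alpha3 beta2 is nonzero on H_q, so each orbit meets the
   domain in exactly one point.  The delta^(2/3)-coefficient of the first
   coordinate is then -(alpha3^2 - xi beta3^2)/det, and the matrix is
   invertible iff alpha3^2 - xi beta3^2 != 0: both hold because xi stays a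
   nonsquare in F_q.  For the latter, a square root y of xi satisfies
   y^p = +-y, hence y^(p^2) = y, and as [F_q : F_p] is odd, y^p = y. *)

Section FrobeniusOddDegree.

Variables (F : finFieldType) (p n : nat).
Hypotheses (cardF : #|F| = (p ^ n)%N) (odd_n : odd n).

Lemma expf_fixed_odd_degree (y : F) : y ^+ (p ^ 2) = y -> y ^+ p = y.
Proof.
move=> fix2; have fix_even k : y ^+ (p ^ k.*2) = y.
  by elim: k => [|k IHk]; rewrite ?expr1 // doubleS !expnSr -mulnA mulnn exprM IHk.
by rewrite -{2}(expf_card y) cardF -(odd_double_half n) odd_n expnD mulnC exprM fix_even expn1.
Qed.

Lemma expf_fixed_of_sqrf_fixed (y : F) :
  prime p -> (y ^+ 2) ^+ p = y ^+ 2 -> y ^+ p = y.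
Proof.
move=> p_pr; rewrite -!exprM mulnC exprM => /eqP; rewrite eqf_sqr.
case/orP=> /eqP yp //; apply: expf_fixed_odd_degree.
have pchF : p \in [pchar F] by exact: card_finPcharP cardF p_pr.
have := pFrobenius_autN pchF y; rewrite !pFrobenius_autE -yp => ypN.
by rewrite expnS expn1 exprM ypN yp opprK.
Qed.

Lemma sqrf_neq_of_Fp_nonsquare (xi : F) :
  prime p -> xi ^+ p = xi -> ~ (exists y : F, y ^+ p = y /\ y ^+ 2 = xi) ->
  forall y : F, y ^+ 2 != xi.
Proof.
move=> p_pr xi_p xi_nsq y; apply/eqP => y2; apply: xi_nsq; exists y.
by split=> //; apply: expf_fixed_of_sqrf_fixed; rewrite ?y2.
Qed.

End FrobeniusOddDegree.

Lemma norm_form_eq0 (F : fieldType) (xi u v : F) :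
  (forall y, y ^+ 2 != xi) -> (u ^+ 2 - v ^+ 2 * xi == 0) = (u == 0) && (v == 0).
Proof.
move=> xi_nsq; apply/idP/idP => [|/andP[/eqP-> /eqP->]]; last first.
  by rewrite expr0n mul0r subrr.
rewrite subr_eq0; have [-> | v0 uv] := eqVneq v 0.
  by rewrite expr0n mul0r sqrf_eq0 andbT.
by case/negP: (xi_nsq (u / v)); rewrite expr_div_n (eqP uv) mulrAC divff ?mul1r ?expf_neq0.
Qed.

Lemma cinv_cconst (F : finFieldType) (delta a : F) :
  a != 0 -> cinv delta (cconst a) = cconst a^-1.
Proof.
move=> a0; rewrite /cinv; case: pickP => [[[y1 y2] y3]|no_inv]; last first.
  by have /eqP := no_inv (cconst a^-1); rewrite /cmul /= !(mul0r, mulr0, addr0) divff.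
rewrite /cmul /cconst /cmk /c1 /c2 /c3 /= !(mul0r, mulr0, addr0) => /eqP[ay1 ay2 ay3].
have /eqP := ay2; have /eqP := ay3; rewrite !mulf_eq0 (negbTE a0) /= => /eqP-> /eqP->.
by rewrite -[a^-1]mulr1 -ay1 mulKf.
Qed.

Section HAction.

Variables (F : finFieldType) (xi : F).

Definition hlin (a b : F) (z : cub F * cub F) : cub F * cub F :=
  (cadd (cscale a z.1) (cscale (b * xi) z.2), cadd (cscale b z.1) (cscale a z.2)).

Definition hdet (z : cub F * cub F) : F := c2 z.1 * c3 z.2 - c3 z.1 * c2 z.2.

Lemma mact_hmat (delta a b c : F) (z : cub F * cub F) :
  c != 0 -> mact delta (hmat xi a b c) z = hlin (a / c) (b / c) z.
Proof.
move=> c0; rewrite /mact /hmat !mxE /= !inordK //.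
have -> : forall al be, cadd (cadd (cscale 0 al) (cscale 0 be)) (cconst c) = cconst c.
  by move=> al be; rewrite /cadd /cscale /cconst /cmk /c1 /c2 /c3 /= !mul0r !add0r.
rewrite cinv_cconst //; case: z => [[[x1 x2] x3] [[y1 y2] y3]].
rewrite /hlin /cmul /cadd /cscale /cconst /cmk /c1 /c2 /c3 /=.
by congr (_, _, _, (_, _, _)); field.
Qed.

Lemma hlin_snd_solve (a b : F) (z : cub F * cub F) :
  hdet z != 0 -> c2 (hlin a b z).2 = 1 -> c3 (hlin a b z).2 = 0 ->
  a = - c3 z.1 / hdet z /\ b = c3 z.2 / hdet z.
Proof.
case: z => [[[x1 x2] x3] [[y1 y2] y3]].
rewrite /hdet /hlin /cadd /cscale /cmk /c2 /c3 /= => det0 e2 e3.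
split; apply: (mulIf det0); rewrite divfK //.
- transitivity (x2 * (b * x3 + a * y3) - x3 * (b * x2 + a * y2)); first by ring.
  by rewrite e2 e3; ring.
- transitivity (y3 * (b * x2 + a * y2) - y2 * (b * x3 + a * y3)); first by ring.
  by rewrite e2 e3; ring.
Qed.

Lemma hnorm_neq0 (z : cub F * cub F) :
  (forall y, y ^+ 2 != xi) -> hdet z != 0 -> c3 z.1 ^+ 2 - c3 z.2 ^+ 2 * xi != 0.
Proof.
move=> xi_nsq; rewrite norm_form_eq0 // /hdet.
by apply: contra => /andP[/eqP-> /eqP->]; rewrite !(mul0r, mulr0) subrr.
Qed.

Lemma Dom_hlin_normal (z : cub F * cub F) :
  (forall y, y ^+ 2 != xi) -> hdet z != 0 ->
  Dom (hlin (- c3 z.1 / hdet z) (c3 z.2 / hdet z) z).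
Proof.
move=> xi_nsq det0; have N0 := hnorm_neq0 xi_nsq det0.
do 4 eexists; split; last first.
  rewrite /hlin /cadd /cscale /cmk /c1 /c2 /c3 /=; congr (_, (_, _, _)).
    by move: det0; rewrite /hdet /c2 /c3 => det0; field.
  by rewrite /hdet /c3; field.
rewrite /c3 /=; have -> : forall x y d : F, - x / d * x + y / d * xi * y =
    - (x ^+ 2 - y ^+ 2 * xi) / d by move=> x y d; ring.
by rewrite mulf_neq0 ?oppr_eq0 ?invr_eq0.
Qed.

Lemma inH_hmat_normal (z : cub F * cub F) :
  (forall y, y ^+ 2 != xi) -> hdet z != 0 ->
  inH xi (hmat xi (- c3 z.1 / hdet z) (c3 z.2 / hdet z) 1).
Proof.
move=> xi_nsq det0; do 3 eexists; split; last by reflexivity.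
have -> : 1 * ((- c3 z.1 / hdet z) ^+ 2 - (c3 z.2 / hdet z) ^+ 2 * xi) =
    (c3 z.1 ^+ 2 - c3 z.2 ^+ 2 * xi) / hdet z ^+ 2 by field.
by rewrite mulf_neq0 ?invr_eq0 ?expf_neq0 ?hnorm_neq0.
Qed.

End HAction.

Lemma Dom_snd (F : finFieldType) (w : cub F * cub F) :
  Dom w -> c2 w.2 = 1 /\ c3 w.2 = 0.
Proof. by case=> x [y [u [v [_ ->]]]]. Qed.

Lemma Dom_Hq (F : finFieldType) (w : cub F * cub F) : Dom w -> Hq w.
Proof.
by case=> x [y [u [v [v0 ->]]]]; rewrite /Hq /c2 /c3 /= mulr0 mulr1 sub0r oppr_eq0.
Qed.

Theorem proposition6p1 (F : finFieldType) (p n : nat) (xi delta : F) :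
  prime p -> odd n -> #|F| = (p ^ n)%N -> (#|F| %% 3 = 1)%N ->
  xi ^+ p = xi -> xi != 0 -> ~ (exists y : F, y ^+ p = y /\ y ^+ 2 = xi) ->
  delta != 0 -> ~ (exists y : F, y ^+ 3 = delta) ->
  fundamental_domain delta (inH xi) (@Hq F) (@Dom F).
Proof.
move=> p_pr odd_n cardF _ xi_p _ xi_Fp_nsq _ _.
have xi_nsq := sqrf_neq_of_Fp_nonsquare cardF odd_n p_pr xi_p xi_Fp_nsq.
split=> [w|z det0]; first exact: Dom_Hq.
set a := - c3 z.1 / hdet z; set b := c3 z.2 / hdet z.
exists (hlin xi a b z); split.
  split; first exact: Dom_hlin_normal.
  exists (hmat xi a b 1); split; first exact: inH_hmat_normal.
  by rewrite mact_hmat ?oner_neq0 // !divr1.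
move=> w [/Dom_snd[w2 w3] [_ [[a' [b' [c [Hc ->]]]] w_def]]].
have c0 : c != 0 by move: Hc; rewrite mulf_eq0 negb_or => /andP[].
rewrite w_def mact_hmat // in w2 w3 *.
by have [-> ->] := hlin_snd_solve det0 w2 w3.
Qed.
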